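(* For every dependency DAG $G$ in which every item has at most $k-1$ dependencies and every cache size $k\ge1$, the deterministic online algorithm Recursive LRU (described in the context) is $k$-competitive for online dependency-aware caching without bypassing, i.e., there is a constant $\alpha$ such that for every request sequence $\sigma$, its cost on $\sigma$ is at most $k\cdot\mathrm{OPT}(\sigma)+\alpha$.
   Context: Model: universe $\mathcal{U}$, DAG $G=(\mathcal{U},E)$, $T(x)$ = set of items reachable from $x$ in $G$ including $x$; each item has at most $k-1$ dependencies. A cache of at most $k$ items is feasible if it contains $T(x)$ for every cached $x$. Upon a request to $v$, the algorithm must make $T(v)$ cached by single-item fetches/evictions keeping the cache feasible after each operation; cost = number of fetches. All algorithms start from the same feasible initial cache; $\mathrm{OPT}(\sigma)$ is the optimal offline cost. $\tau$ is a fixed total order on $\mathcal{U}$ with $v<_\tau u$ whenever $v\in T(u)$, $v\neq u$. Algorithm Recursive LRU: it keeps a timestamp for each item, drawn from a strictly increasing global clock. On a request to $v$: first, for each $w\in T(v)$ in decreasing $\tau$-order (top to bottom), assign $w$ the next timestamp (so every item of $T(v)$ gets a more recent timestamp than before, and descendants get more recent timestamps than their ancestors within $T(v)$). Second, for each $w\in T(v)$ in increasing $\tau$-order (bottom to top), if $w$ is not cached: if the cache holds $k$ items, evict the cached item with the least recent timestamp; then fetch $w$. This is the classic LRU rule applied to all items of $T(v)$. *)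

From mathcomp Require Import all_boot.
Set Implicit Arguments. Unset Strict Implicit. Unset Printing Implicit Defensive.

Section Model.
Variable U : finType.
Variable E : rel U.          (* E x y : y is a (direct) dependency of x *)

Definition T (x : U) : {set U} := [set y | connect E x y].

Definition acyclic : Prop := forall x y, E x y -> ~~ connect E y x.

Definition feasible (k : nat) (C : {set U}) : bool :=
  (#|C| <= k) && [forall x in C, T x \subset C].

Inductive op := Fetch of U | Evict of U.

Definition apply_op (C : {set U}) (o : op) : {set U} :=
  match o with Fetch w => w |: C | Evict w => C :\ w end.

Definition is_fetch (o : op) : bool := if o is Fetch _ then true else false.

Definition run_ops (C : {set U}) (ops : seq op) : {set U} := foldl apply_op C ops.

Fixpoint ops_feasible (k : nat) (C : {set U}) (ops : seq op) : bool :=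
  match ops with
  | [::] => true
  | o :: os => feasible k (apply_op C o) && ops_feasible k (apply_op C o) os
  end.

(* S (one list of operations per request) serves sigma from cache C:
   feasibility after each operation, and T(v) cached after serving request v *)
Fixpoint serves (k : nat) (C : {set U}) (sigma : seq U) (S : seq (seq op)) : bool :=
  match sigma, S with
  | [::], [::] => true
  | v :: s, ops :: S' =>
      [&& ops_feasible k C ops, T v \subset run_ops C ops & serves k (run_ops C ops) s S']
  | _, _ => false
  end.

Definition cost (S : seq (seq op)) : nat := sumn [seq count is_fetch ops | ops <- S].

Definition stamp (ts : U -> nat) (t : nat) (s : seq U) : (U -> nat) * nat :=
  foldl (fun p w => ((fun u => if u == w then p.2 else p.1 u), p.2.+1)) (ts, t) s.

Definition lru_victim (ts : U -> nat) (C : {set U}) : option U :=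
  [pick u in C | [forall u' in C, ts u <= ts u']].

Definition load_one (k : nat) (ts : U -> nat) (p : {set U} * seq op) (w : U)
  : {set U} * seq op :=
  if w \in p.1 then p else
  let ev := if #|p.1| == k then
              (if lru_victim ts p.1 is Some u then [:: Evict u] else [::])
            else [::] in
  let C' := run_ops p.1 ev in
  (w |: C', p.2 ++ ev ++ [:: Fetch w]).

Record lru_state := LruState { st_cache : {set U}; st_ts : U -> nat; st_clock : nat }.

Definition rlru_step (k : nat) (tau : U -> nat) (st : lru_state) (v : U)
  : lru_state * seq op :=
  let top_down := sort (fun a b => tau b <= tau a) (enum (T v)) in
  let '(ts', t') := stamp (st_ts st) (st_clock st) top_down in
  let '(C', ops) := foldl (load_one k ts') (st_cache st, [::]) (rev top_down) in
  (LruState C' ts' t', ops).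

Fixpoint rlru_from (k : nat) (tau : U -> nat) (st : lru_state) (sigma : seq U)
  : seq (seq op) :=
  match sigma with
  | [::] => [::]
  | v :: s => let p := rlru_step k tau st v in p.2 :: rlru_from k tau p.1 s
  end.

Definition rlru (k : nat) (tau : U -> nat) (C0 : {set U}) (ts0 : U -> nat)
  (sigma : seq U) : seq (seq op) :=
  rlru_from k tau (LruState C0 ts0 (\max_(u : U) ts0 u).+1) sigma.

End Model.

From mathcomp Require Import all_boot zify.
Set Implicit Arguments. Unset Strict Implicit. Unset Printing Implicit Defensive.

(* Split the requests greedily into phases, each requesting at most k distinct
   items (all of T(v) counts for a request to v).  A phase and the request that
   starts the next one involve more than k items, so every algorithm fetches at
   least once per phase, except possibly the first.  Recursive LRU stamps the
   items of the current phase more recently than every other cached item, and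
   within T(v) dependencies more recently than their dependents.  Hence it never
   evicts an item of the current phase, its evictions keep the cache feasible,
   and it fetches at most k items per phase. *)

Section Operations.
Variables (U : finType) (E : rel U).
Implicit Types (C D : {set U}) (ops : seq (op U)).

Lemma feasibleP k D :
  reflect (#|D| <= k /\ forall x, x \in D -> T E x \subset D) (feasible E k D).
Proof. by apply: (iffP andP) => -[Dk DT]; split=> //; apply/forall_inP. Qed.

Lemma mem_T_refl x : x \in T E x.
Proof. by rewrite inE connect0. Qed.

Lemma mem_T_trans x y z : y \in T E x -> z \in T E y -> z \in T E x.
Proof. by rewrite !inE; apply: connect_trans. Qed.

Lemma cost_cons ops S : cost (ops :: S) = count (@is_fetch U) ops + cost S.
Proof. by []. Qed.

Lemma run_ops_cat C o1 o2 : run_ops C (o1 ++ o2) = run_ops (run_ops C o1) o2.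
Proof. exact: foldl_cat. Qed.

Lemma ops_feasible_cat k C o1 o2 :
  ops_feasible E k C (o1 ++ o2) =
  ops_feasible E k C o1 && ops_feasible E k (run_ops C o1) o2.
Proof. by elim: o1 C => [|o os IH] C //=; rewrite IH andbA. Qed.

Lemma run_ops_card_le k C ops :
  #|C| <= k -> ops_feasible E k C ops -> #|run_ops C ops| <= k.
Proof.
by elim: ops C => [|o os IH] C //= _ /andP[/andP[+ _]]; apply: IH.
Qed.

Lemma run_ops_subset_nofetch C ops :
  count (@is_fetch U) ops = 0 -> run_ops C ops \subset C.
Proof.
elim: ops C => [|[w|w] os IH] C //= nofetch.
exact: subset_trans (IH _ nofetch) (subsetDl C [set w]).
Qed.

End Operations.

Section Phases.
Variables (U : finType) (E : rel U) (k : nat).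

(* Greedy partition of a request sequence into phases, each requesting at most
   [k] distinct items; [A] holds the items requested so far in the current
   phase, and [phases A s] counts the phases started during [s]. *)
Fixpoint phases (A : {set U}) (s : seq U) : nat :=
  if s is v :: s' then
    if #|A :|: T E v| <= k then phases (A :|: T E v) s'
    else (phases (T E v) s').+1
  else 0.

(* Every new phase requests more than [k] items together with the phase before
   it, so any algorithm fetches during the request that starts it, unless its
   cache already failed to hold the current phase. *)
Lemma phases_le_cost sigma (C A : {set U}) S :
  #|C| <= k -> serves E k C sigma S -> phases A sigma <= cost S + (k < #|A :|: C|).
Proof.
elim: sigma C A S => [|v s IH] C A [|ops S] //= Ck /and3P[ops_feas Tv_sub serves_s].
have C'k := run_ops_card_le Ck ops_feas.
have nofetch_sub : count (@is_fetch U) ops = 0 ->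
    A :|: T E v :|: run_ops C ops \subset A :|: C.
  move=> /(run_ops_subset_nofetch C) C'C.
  rewrite subUset setUS ?(subset_trans Tv_sub C'C) //=.
  exact: subset_trans C'C (subsetUr A C).
have gt_k_mono (X Y : {set U}) : X \subset Y -> (k < #|X|) <= (k < #|Y|).
  by move/subset_leq_card=> XY; case: ltnP => //= kX; rewrite (leq_trans kX XY).
rewrite cost_cons.
have [nofetch|fetch] := posnP (count (@is_fetch U) ops); case: ifP => Ak.
- apply: leq_trans (IH _ _ _ C'k serves_s) _.
  by rewrite nofetch add0n leq_add2l gt_k_mono ?nofetch_sub.
- have kAC : k < #|A :|: C|.
    apply: leq_trans (subset_leq_card (subset_trans (subsetUl _ _) (nofetch_sub nofetch))).
    by rewrite ltnNge Ak.
  have := IH _ (T E v) _ C'k serves_s.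
  by rewrite (setUidPr Tv_sub) ltnNge C'k addn0 nofetch add0n kAC; lia.
- have := IH _ (A :|: T E v) _ C'k serves_s; case: (k < _); case: (k < _); lia.
- have := IH _ (T E v) _ C'k serves_s.
  by rewrite (setUidPr Tv_sub) ltnNge C'k addn0; case: (k < _); lia.
Qed.

End Phases.

Section Timestamps.
Variable U : finType.

Lemma stamp_spec (ts : U -> nat) t s : uniq s ->
  (forall u, (stamp ts t s).1 u = if u \in s then t + index u s else ts u) /\
  (stamp ts t s).2 = t + size s.
Proof.
elim: s ts t => [|w s IH] ts t /=; first by rewrite addn0.
case/andP=> ws s_uniq.
have [stamp1 stamp2] := IH (fun u => if u == w then t else ts u) t.+1 s_uniq.
rewrite /stamp /= in stamp1 stamp2 *.
split=> [u|]; last by rewrite stamp2 addSnnS.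
rewrite stamp1 in_cons; case: (eqVneq u w) => [->|uw] /=; first by rewrite (negPf ws) addn0.
by case: (u \in s); rewrite ?addSnnS.
Qed.

Lemma lru_victim_min (ts : U -> nat) (D : {set U}) : D != set0 ->
  exists u, [/\ lru_victim ts D = Some u, u \in D & forall u', u' \in D -> ts u <= ts u'].
Proof.
case/set0Pn=> d dD; rewrite /lru_victim; case: pickP => [u /andP[uD /forall_inP umin]|none].
  by exists u.
case: (arg_minnP ts dD) => u uD umin.
by have /andP[] := none u; split=> //; apply/forall_inP.
Qed.

End Timestamps.

Section Loading.
Variables (U : finType) (E : rel U) (k : nat) (C B : {set U}) (ts : U -> nat).
Hypothesis B_le_k : #|B| <= k.

(* State reached after loading the items [pre] of the requested set, starting
   from cache [C], with [B] the items of the current phase. *)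
Record load_inv (pre : seq U) (D : {set U}) (ops : seq (op U)) : Prop := LoadInv {
  load_run : run_ops C ops = D;
  load_ops_feasible : ops_feasible E k C ops;
  load_feasible : feasible E k D;
  load_deps_newer : forall x y, x \in D -> y \in T E x -> y != x -> ts x < ts y;
  load_phase_newer : forall b c, b \in D -> b \in B -> c \in D -> c \notin B -> ts c < ts b;
  load_keeps_phase : C :&: B \subset D;
  load_loaded : {subset pre <= D};
  load_fetches : count (@is_fetch U) ops <= count (fun x => x \notin C) pre }.

Lemma load_inv_hit pre D ops w :
  load_inv pre D ops -> w \in D -> load_inv (rcons pre w) D ops.
Proof.
case=> ? ? ? ? ? ? loaded fetches wD; split=> //.
  by move=> x; rewrite -cats1 mem_cat inE => /orP[/loaded|/eqP->].
by rewrite -cats1 count_cat (leq_trans fetches) ?leq_addr.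
Qed.

Lemma load_inv_evict pre D ops w :
  load_inv pre D ops -> #|D| = k -> w \in B -> w \notin D -> {subset pre <= B} ->
  exists u, [/\ lru_victim ts D = Some u, u \in D &
                load_inv pre (D :\ u) (ops ++ [:: Evict u])].
Proof.
case=> run ops_feas /feasibleP[_ D_closed] deps_newer phase_newer keeps loaded fetches.
move=> Dk wB wD preB.
have D0 : D != set0.
  by apply/set0Pn/card_gt0P; rewrite Dk (leq_trans _ B_le_k) //; apply/card_gt0P; exists w.
have [u [victim uD umin]] := lru_victim_min ts D0.
(* A victim in the phase would make every cached item, and [w], lie in the phase. *)
have uB : u \notin B.
  apply/negP=> uB; have : w |: D \subset B.
    apply/subsetP=> x /setU1P[->//|xD]; apply/negPn/negP=> xB.
    by have := phase_newer u x uD uB xD xB; rewrite ltnNge umin.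
  by move/subset_leq_card; rewrite cardsU1 wD Dk; lia.
have Du_closed x : x \in D :\ u -> T E x \subset D :\ u.
  case/setD1P=> xu xD; apply/subsetP=> y yTx.
  rewrite in_setD1 (subsetP (D_closed x xD) y yTx) andbT; apply/eqP=> yu.
  move: yTx; rewrite yu => uTx.
  have := deps_newer x u xD uTx; rewrite eq_sym xu => /(_ isT).
  by rewrite ltnNge umin.
have Du_feas : feasible E k (D :\ u).
  by apply/feasibleP; split=> //; rewrite -Dk subset_leq_card ?subsetDl.
exists u; split=> //; split.
- by rewrite run_ops_cat run.
- by rewrite ops_feasible_cat ops_feas run /= Du_feas.
- exact: Du_feas.
- by move=> x y /setD1P[_ xD]; apply: deps_newer.
- by move=> b c /setD1P[_ bD] bB /setD1P[_ cD]; apply: phase_newer.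
- apply/subsetP=> x xCB; rewrite in_setD1 (subsetP keeps) // andbT.
  by apply: contraNneq uB => <-; case/setIP: xCB.
- by move=> x xpre; rewrite in_setD1 loaded // andbT; apply: contraNneq uB => <-; apply: preB.
- by rewrite count_cat addn0.
Qed.

Lemma load_inv_fetch pre D ops w :
  load_inv pre D ops -> #|D| < k -> w \notin D -> w \in B ->
  {subset T E w :\ w <= pre} ->
  (forall y, y \in T E w -> y != w -> ts w < ts y) ->
  (forall c, c \notin B -> ts c < ts w) ->
  load_inv (rcons pre w) (w |: D) (ops ++ [:: Fetch w]).
Proof.
case=> run ops_feas /feasibleP[_ D_closed] deps_newer phase_newer keeps loaded fetches.
move=> Dk wD wB w_deps w_deps_newer w_newer.
have wC : w \notin C by apply: contra wD => wC; apply: (subsetP keeps); rewrite inE wC.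
have wD_feas : feasible E k (w |: D).
  apply/feasibleP; split; first by rewrite cardsU1; case: (w \notin D); lia.
  move=> x /setU1P[->|xD]; last exact: subset_trans (D_closed x xD) (subsetUr _ _).
  apply/subsetP=> y yTw; case: (eqVneq y w) => [->|yw]; first exact: setU11.
  by rewrite in_setU1 loaded ?orbT // w_deps // in_setD1 yw.
split.
- by rewrite run_ops_cat run.
- by rewrite ops_feasible_cat ops_feas run /= wD_feas.
- exact: wD_feas.
- by move=> x y /setU1P[->|xD]; [apply: w_deps_newer | apply: deps_newer].
- move=> b c /setU1P[->|bD] bB /setU1P[->|cD] cB.
  + by rewrite bB in cB.
  + exact: w_newer.
  + by rewrite wB in cB.
  + exact: phase_newer.
- exact: subset_trans keeps (subsetUr _ _).
- move=> x; rewrite -cats1 mem_cat inE => /orP[/loaded xD|/eqP->].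
    exact: setU1r.
  exact: setU11.
- by rewrite -cats1 !count_cat /= wC !addn0 leq_add2r.
Qed.

Lemma load_one_inv pre p w :
  load_inv pre p.1 p.2 -> w \in B -> {subset pre <= B} ->
  {subset T E w :\ w <= pre} ->
  (forall y, y \in T E w -> y != w -> ts w < ts y) ->
  (forall c, c \notin B -> ts c < ts w) ->
  load_inv (rcons pre w) (load_one k ts p w).1 (load_one k ts p w).2.
Proof.
case: p => D ops /= inv wB preB w_deps w_deps_newer w_newer.
rewrite /load_one /=; case: ifP => [wD|/negbT wD]; first exact: load_inv_hit.
case: eqP => [Dk|/eqP Dk].
  have [u [-> uD inv_u]] := load_inv_evict inv Dk wB wD preB.
  rewrite /= -[[:: _; _]]/([:: Evict u] ++ [:: Fetch w]) catA.
  apply: load_inv_fetch inv_u _ _ wB w_deps w_deps_newer w_newer.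
    by have := cardsD1 u D; rewrite uD Dk; lia.
  by rewrite in_setD1 (negPf wD) andbF.
rewrite /run_ops /=; apply: (load_inv_fetch inv _ wD wB w_deps w_deps_newer w_newer).
by rewrite ltn_neqAle Dk; case/andP: (load_feasible inv).
Qed.

Definition deps_first (L : seq U) : Prop :=
  forall pre w rest, L = pre ++ w :: rest -> {subset T E w :\ w <= pre}.

Lemma load_foldl_inv pre l p :
  {subset pre ++ l <= B} -> deps_first (pre ++ l) ->
  (forall w, w \in l -> forall y, y \in T E w -> y != w -> ts w < ts y) ->
  (forall w, w \in l -> forall c, c \notin B -> ts c < ts w) ->
  load_inv pre p.1 p.2 ->
  load_inv (pre ++ l) (foldl (load_one k ts) p l).1 (foldl (load_one k ts) p l).2.
Proof.
elim: l pre p => [|w l IH] pre p LB L_deps deps_newer phase_newer inv /=.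
  by rewrite cats0.
have preB : {subset pre <= B} by move=> x x_pre; rewrite LB // mem_cat x_pre.
have wB : w \in B by rewrite LB // mem_cat mem_head orbT.
have inv_w := load_one_inv inv wB preB (L_deps pre w l erefl)
  (deps_newer w (mem_head _ _)) (phase_newer w (mem_head _ _)).
rewrite -cat_rcons in LB L_deps *; apply: IH => // x xl.
  by apply: deps_newer; rewrite inE xl orbT.
by apply: phase_newer; rewrite inE xl orbT.
Qed.

End Loading.

Section Request.
Variables (U : finType) (E : rel U) (k : nat) (tau : U -> nat).
Hypothesis tau_deps : forall u w, w \in T E u -> w != u -> tau w < tau u.

(* [A] is the set of items requested so far in the current phase. *)
Record rlru_inv (st : lru_state U) (A : {set U}) : Prop := RlruInv {
  rlru_feasible : feasible E k (st_cache st);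
  rlru_deps_newer : forall x y, x \in st_cache st -> y \in T E x -> y != x ->
    st_ts st x < st_ts st y;
  rlru_clock : forall u, st_ts st u < st_clock st;
  rlru_phase_cached : A \subset st_cache st;
  rlru_phase_card : #|A| <= k;
  rlru_phase_newer : forall a c, a \in A -> c \in st_cache st -> c \notin A ->
    st_ts st c < st_ts st a }.

Lemma rlru_inv_set0 st A : rlru_inv st A -> rlru_inv st set0.
Proof. by case=> *; split=> //; rewrite ?sub0set ?cards0 // => a c; rewrite inE. Qed.

Definition top_down (v : U) : seq U := sort (fun a b => tau b <= tau a) (enum (T E v)).

Lemma mem_top_down v x : (x \in top_down v) = (x \in T E v).
Proof. by rewrite mem_sort mem_enum. Qed.

Lemma uniq_top_down v : uniq (top_down v).
Proof. by rewrite sort_uniq enum_uniq. Qed.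

Lemma sorted_top_down v : sorted (fun a b => tau b <= tau a) (top_down v).
Proof. by apply: sort_sorted => a b; apply: leq_total. Qed.

Lemma deps_first_rev_top_down v : deps_first E (rev (top_down v)).
Proof.
move=> pre w rest L_eq y /setD1P[yw yTw].
have wT : w \in T E v by rewrite -mem_top_down -mem_rev L_eq mem_cat mem_head orbT.
have : y \in rev (top_down v) by rewrite mem_rev mem_top_down (mem_T_trans wT yTw).
rewrite L_eq mem_cat inE (negPf yw) /= => /orP[//|y_rest].
have : sorted (fun a b => tau a <= tau b) (pre ++ w :: rest).
  by rewrite -L_eq rev_sorted sorted_top_down.
have tau_le_trans : transitive (fun a b => tau a <= tau b).
  by move=> b a c; apply: leq_trans.
rewrite sorted_cat_cons => /andP[_ /(order_path_min tau_le_trans)/allP/(_ y y_rest)].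
by rewrite leqNgt tau_deps.
Qed.

Section Stamping.
Variables (st : lru_state U) (v : U).
Let ts' := (stamp (st_ts st) (st_clock st) (top_down v)).1.

Lemma stamp_top_downE u :
  ts' u = if u \in T E v then st_clock st + index u (top_down v) else st_ts st u.
Proof.
rewrite /ts'; have [-> _] := stamp_spec (st_ts st) (st_clock st) (uniq_top_down v).
by rewrite mem_top_down.
Qed.

Lemma stamp_top_down_newer x y : (forall u, st_ts st u < st_clock st) ->
  x \in T E v -> y \notin T E v -> ts' y < ts' x.
Proof.
by move=> clock xT yT; rewrite !stamp_top_downE xT (negPf yT) (leq_trans (clock y)) ?leq_addr.
Qed.

Lemma stamp_top_down_deps x y : x \in T E v -> y \in T E x -> y != x -> ts' x < ts' y.
Proof.
move=> xT yTx yx; have yT := mem_T_trans xT yTx.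
rewrite !stamp_top_downE xT yT ltn_add2l; rewrite -!mem_top_down in xT yT.
have [//|yx_index|/(index_inj x xT yT) xy] := ltngtP; last by rewrite xy eqxx in yx.
have tau_ge_trans : transitive (fun a b => tau b <= tau a).
  by move=> b a c ba cb; apply: leq_trans cb ba.
have := sorted_ltn_index tau_ge_trans (sorted_top_down v) y x yT xT yx_index.
by rewrite leqNgt tau_deps.
Qed.

Lemma stamp_top_down_clock : (forall u, st_ts st u < st_clock st) ->
  forall u, ts' u < (stamp (st_ts st) (st_clock st) (top_down v)).2.
Proof.
have [_ ->] := stamp_spec (st_ts st) (st_clock st) (uniq_top_down v).
move=> clock u; rewrite stamp_top_downE; case: ifP => [uT|_].
  by rewrite ltn_add2l index_mem mem_top_down.
exact: leq_trans (clock u) (leq_addr _ _).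
Qed.

(* Stamping the requested items makes them the most recent ones, with
   dependencies more recent than their dependents. *)
Lemma load_inv_stamp A : rlru_inv st A ->
  load_inv E k (st_cache st) (A :|: T E v) ts' [::] (st_cache st) [::].
Proof.
case=> feas deps_newer clock A_cached _ phase_newer; split=> //.
- move=> x y xC yTx yx; have [xT|xT] := boolP (x \in T E v).
    exact: stamp_top_down_deps.
  have [yT|yT] := boolP (y \in T E v); first exact: stamp_top_down_newer.
  by rewrite !stamp_top_downE (negPf xT) (negPf yT) deps_newer.
- move=> b c bC /setUP[bA|bT] cC; rewrite in_setU negb_or => /andP[cA cT].
    have [bT|bT] := boolP (b \in T E v); first exact: stamp_top_down_newer.
    by rewrite !stamp_top_downE (negPf bT) (negPf cT) phase_newer.
  exact: stamp_top_down_newer.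
- exact: subsetIl.
Qed.

End Stamping.

Lemma rlru_stepE st v :
  let s := stamp (st_ts st) (st_clock st) (top_down v) in
  let p := foldl (load_one k s.1) (st_cache st, [::]) (rev (top_down v)) in
  rlru_step E k tau st v = (LruState p.1 s.1 s.2, p.2).
Proof. by rewrite /rlru_step -/(top_down v); case: stamp => ts' t' /=; case: foldl. Qed.

Lemma rlru_step_spec st A v : rlru_inv st A -> #|A :|: T E v| <= k ->
  let st' := (rlru_step E k tau st v).1 in
  let ops := (rlru_step E k tau st v).2 in
  [/\ ops_feasible E k (st_cache st) ops, run_ops (st_cache st) ops = st_cache st',
      T E v \subset st_cache st', count (@is_fetch U) ops <= #|T E v :\: st_cache st|
    & rlru_inv st' (A :|: T E v)].
Proof.
move=> inv Bk; rewrite rlru_stepE /=.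
set ts' := (stamp _ _ _).1; set loaded := foldl _ _ _.
have top_phase : {subset [::] ++ rev (top_down v) <= A :|: T E v}.
  by move=> x; rewrite mem_rev mem_top_down => xT; rewrite inE xT orbT.
have top_deps_newer w : w \in rev (top_down v) -> forall y, y \in T E w -> y != w ->
    ts' w < ts' y.
  by rewrite mem_rev mem_top_down => wT y; apply: stamp_top_down_deps.
have top_newer w : w \in rev (top_down v) -> forall c, c \notin A :|: T E v ->
    ts' c < ts' w.
  rewrite mem_rev mem_top_down => wT c; rewrite in_setU negb_or => /andP[_ cT].
  exact: stamp_top_down_newer (rlru_clock inv) wT cT.
have [run ops_feas feas deps_newer phase_newer keeps Tv_loaded fetches] :=
  load_foldl_inv (p := (st_cache st, [::])) Bk top_phase (@deps_first_rev_top_down v)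
    top_deps_newer top_newer (load_inv_stamp v inv).
have Tv_cached : T E v \subset loaded.1.
  by apply/subsetP=> x xT; apply: Tv_loaded; rewrite /= mem_rev mem_top_down.
have phase_cached : A :|: T E v \subset loaded.1.
  rewrite subUset Tv_cached andbT; apply: subset_trans keeps.
  by rewrite subsetI subsetUl rlru_phase_cached.
split=> //.
  rewrite /= count_rev in fetches; apply: leq_trans fetches _.
  rewrite -size_filter cardE; apply: uniq_leq_size; first exact/filter_uniq/uniq_top_down.
  by move=> x; rewrite mem_filter mem_enum in_setD mem_top_down andbC.
split=> //.
- exact: stamp_top_down_clock (rlru_clock inv).
- by move=> a c aB; apply: phase_newer => //; apply: (subsetP phase_cached).
Qed.

End Request.

Section Competitive.
Variables (U : finType) (E : rel U) (k : nat) (tau : U -> nat).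
Hypothesis tau_deps : forall u w, w \in T E u -> w != u -> tau w < tau u.
Hypothesis T_le_k : forall x, #|T E x| <= k.

(* [#|A|] is a potential: within a phase each item is fetched at most once. *)
Lemma rlru_from_cost sigma st A : rlru_inv E k st A ->
  serves E k (st_cache st) sigma (rlru_from E k tau st sigma) /\
  cost (rlru_from E k tau st sigma) + #|A| <= k * phases E k A sigma + k.
Proof.
elim: sigma st A => [|v s IH] st A inv /=.
  by rewrite muln0 add0n (rlru_phase_card inv).
rewrite cost_cons.
have A_cached := rlru_phase_cached inv.
case: ifP => [Ak|_].
  have [ops_feas run Tv_cached fetches inv'] := rlru_step_spec tau_deps inv Ak.
  have [serves_s cost_s] := IH _ _ inv'.
  split; first by rewrite ops_feas run Tv_cached serves_s.
  suff : count (@is_fetch U) (rlru_step E k tau st v).2 + #|A| <= #|A :|: T E v| by lia.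
  apply: leq_trans (_ : #|T E v :\: st_cache st| + #|A| <= _); first by rewrite leq_add2r.
  rewrite addnC -cardsUI (_ : A :&: _ = set0) ?cards0 ?addn0.
    by rewrite subset_leq_card // setUS // subsetDl.
  by apply/setP=> x; rewrite !inE; case: (boolP (x \in A)) => // /(subsetP A_cached) ->.
have Tk : #|set0 :|: T E v| <= k by rewrite set0U T_le_k.
have [ops_feas run Tv_cached fetches] := rlru_step_spec tau_deps (rlru_inv_set0 inv) Tk.
rewrite set0U => inv'; have [serves_s cost_s] := IH _ _ inv'.
split; first by rewrite ops_feas run Tv_cached serves_s.
have := subset_leq_card (subsetDl (T E v) (st_cache st)).
have := rlru_phase_card inv; lia.
Qed.

End Competitive.

(* Acyclicity follows from the hypothesis on [tau]. *)
Theorem mainTheorem7 (U : finType) (E : rel U) (k : nat) (tau : U -> nat)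
  (C0 : {set U}) (ts0 : U -> nat) :
  acyclic E ->
  0 < k ->
  (forall x : U, #|T E x :\ x| <= k.-1) ->
  injective tau ->
  (forall u v : U, v \in T E u -> v != u -> tau v < tau u) ->
  feasible E k C0 ->
  injective ts0 ->
  (forall x y : U, x \in C0 -> y \in T E x -> y != x -> ts0 x < ts0 y) ->
  exists alpha : nat, forall sigma : seq U,
    serves E k C0 sigma (rlru E k tau C0 ts0 sigma) /\
    (forall S : seq (seq (op U)), serves E k C0 sigma S ->
       cost (rlru E k tau C0 ts0 sigma) <= k * cost S + alpha).
Proof.
move=> _ k_gt0 deps_le_k _ tau_deps C0_feas _ C0_deps_newer.
have T_le_k x : #|T E x| <= k by rewrite (cardsD1 x) mem_T_refl; have := deps_le_k x; lia.
have C0k : #|C0| <= k by case/andP: C0_feas.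
have inv0 : rlru_inv E k (LruState C0 ts0 (\max_(u : U) ts0 u).+1) set0.
  split=> //=; rewrite ?sub0set ?cards0 //; first by move=> u; rewrite ltnS leq_bigmax.
  by move=> a c; rewrite inE.
exists k => sigma; have [serves_rlru rlru_cost] := rlru_from_cost tau_deps T_le_k sigma inv0.
split=> // S serves_S.
have := phases_le_cost set0 C0k serves_S; rewrite set0U ltnNge C0k addn0 => phases_le.
rewrite cards0 addn0 in rlru_cost; apply: leq_trans rlru_cost _.
by rewrite leq_add2r leq_mul2l phases_le orbT.
Qed.
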